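(* Let $k\ge5$ be odd and consider the regular $k$-gon process. There exists $\delta_k>0$ (depending only on $k$) such that for every $n$, if $m_i(n)<\rho_k+\delta_k$ for all $i=1,\dots,k$, then the change regions $\mathcal R_1(n),\dots,\mathcal R_k(n)$ are pairwise disjoint.
   Context: Let $k\ge5$ be odd and $K\subset\mathbb R^2$ the regular $k$-gon with circumradius $1$, centroid at the origin, with $(0,1)$ a vertex; $v_1,\dots,v_k$ are the position vectors of its vertices in counterclockwise order, and $\rho_k=\cos(\pi/k)$. The regular $k$-gon process: $K_0=K$, $p_{n+1}$ uniform random point in $K_n$ (conditionally on the past), $K_{n+1}=K_n\cap(p_{n+1}+K)$. Let $\alpha_i(n)=\max_{x\in K_n}\langle x,v_i\rangle$, $\alpha_i'(n)=\min_{x\in K_n}\langle x,v_i\rangle$, the $i$th height $m_i(n)=\alpha_i(n)-\alpha_i'(n)$, and the $i$th change region $\mathcal R_i(n)=\{x\in K_n:\langle x,v_i\rangle\ge\alpha_i'(n)+\rho_k\}$. *)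

From Stdlib Require Import Reals Lra Lia.
Open Scope R_scope.

Definition pt := (R * R)%type.
Definition dot (x y : pt) : R := fst x * fst y + snd x * snd y.
Definition psub (x y : pt) : pt := (fst x - fst y, snd x - snd y).

Definition rho (k : nat) : R := cos (PI / INR k).

(* i-th vertex (0-indexed, i = 0..k-1), counterclockwise, v_0 = (0,1):
   v_i = (cos(pi/2 + 2 pi i/k), sin(pi/2 + 2 pi i/k)). *)
Definition vtx (k i : nat) : pt :=
  (cos (PI / 2 + 2 * PI * INR i / INR k), sin (PI / 2 + 2 * PI * INR i / INR k)).

Definition inK (k : nat) (x : pt) : Prop :=
  exists w : nat -> R,
    (forall i, (i < k)%nat -> 0 <= w i) /\
    sum_f_R0 w (k - 1) = 1 /\
    fst x = sum_f_R0 (fun i => w i * fst (vtx k i)) (k - 1) /\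
    snd x = sum_f_R0 (fun i => w i * snd (vtx k i)) (k - 1).

(* K_n = K ∩ (p_1 + K) ∩ ... ∩ (p_n + K), for a sequence of points p (p 0 unused). *)
Definition inKn (k : nat) (p : nat -> pt) (n : nat) (x : pt) : Prop :=
  inK k x /\ forall j, (1 <= j <= n)%nat -> inK k (psub x (p j)).

Definition admissible (k : nat) (p : nat -> pt) : Prop :=
  forall j, inKn k p j (p (S j)).

Definition is_alpha (k : nat) (p : nat -> pt) (n i : nat) (a : R) : Prop :=
  (exists x, inKn k p n x /\ dot x (vtx k i) = a) /\
  (forall x, inKn k p n x -> dot x (vtx k i) <= a).

Definition is_alpha' (k : nat) (p : nat -> pt) (n i : nat) (a : R) : Prop :=
  (exists x, inKn k p n x /\ dot x (vtx k i) = a) /\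
  (forall x, inKn k p n x -> a <= dot x (vtx k i)).

Definition is_height (k : nat) (p : nat -> pt) (n i : nat) (h : R) : Prop :=
  exists a a', is_alpha k p n i a /\ is_alpha' k p n i a' /\ h = a - a'.

Definition in_change_region (k : nat) (p : nat -> pt) (n i : nat) (x : pt) : Prop :=
  inKn k p n x /\
  exists a', is_alpha' k p n i a' /\ a' + rho k <= dot x (vtx k i).

(* Write [k = 2m+1] and [theta = 2 PI / k]; then [K = {z | <z, v a> >= - rho for all a}],
   so [K_n] is a compact polygon cut out by translates of these constraints.  Take
   [delta = 1 - rho]: all heights below [1] means that [K_n] has width [< 1] in every
   direction [v l].

   Suppose [x] lies in the change regions of [v i] and [v (i+g)], [1 <= g <= m].  If some
   [M] in [K_n] minimizes both [<., v i>] and [<., v (i+g)>], then [x - M] has inner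
   product [>= rho] with both; as [v i + v (i+g) = +-2 cos (g theta / 2) v (i + g(m+1))]
   and [cos (g theta / 2) <= rho], this gives [|<x - M, v (i+g(m+1))>| >= 1], contradicting
   the width bound.  Otherwise consider a maximizer [M] of [<., v c>], [c = i+m+1].  If no
   two tight constraints at [M] had normals [v (c+t)], [v (c+t')] with
   [t <= m < t' <= t + m], all tight normals would lie in a half-turn arc and [M] could be
   pushed in a direction increasing [<., v c>].  A tight normal is minimized at [M], and so
   is every normal between two of them; so either [M] minimizes [v i] and [v (i+g)], or
   [v (c+t') = v (i+u)] with [u < g], and [x] lies in the change region of [v (i+u)] too.
   Induction on [g] concludes. *)

From Stdlib Require Import Reals Lra Lia Arith Classical.
From mathcomp Require all_boot all_order all_algebra.
From mathcomp Require all_classical all_reals all_analysis.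
From mathcomp Require Rstruct Rstruct_topology.
Open Scope R_scope.

Definition polyhedron {I : Type} (S : I -> Prop) (u : I -> pt) (c : I -> R) (z : pt) : Prop :=
  forall i, S i -> c i <= dot z (u i).

Module Compactness.
Import all_boot all_order all_algebra all_classical all_reals all_analysis Rstruct Rstruct_topology.
Import Order.TTheory GRing.Theory Num.Theory numFieldNormedType.Exports.
Local Open Scope classical_set_scope.
Local Open Scope ring_scope.

Lemma dot_continuous (v : pt) : continuous (fun z : R * R => dot z v).
Proof.
have h : continuous (fun z : R^o * R^o => (z.1 * v.1 + z.2 * v.2 : R^o)).
  by move=> z; apply: cvgD; apply: cvgM; (exact: cvg_fst || exact: cvg_snd || exact: cvg_cst).
exact: h.
Qed.

Lemma dot_max_on_bounded_polyhedron (I : Type) (S : I -> Prop) (u : I -> pt) (c : I -> R)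
    (v z0 : pt) (lo hi : R) :
  polyhedron S u c z0 ->
  (forall z, polyhedron S u c z -> Rle lo (fst z) /\ Rle (fst z) hi /\ Rle lo (snd z) /\ Rle (snd z) hi) ->
  exists z, polyhedron S u c z /\ forall z', polyhedron S u c z' -> Rle (dot z' v) (dot z v).
Proof.
move=> Pz0 Pbox.
have clP : closed (polyhedron S u c : set (R * R)).
  have -> : polyhedron S u c = \bigcap_(i in S) ((fun z : R * R => dot z (u i)) @^-1` [set x | c i <= x]).
    by apply/seteqP; split => z Hz i Si; apply/RleP; apply: Hz.
  apply: closed_bigI => i Si; apply: preimage_closed; last exact: closed_ge.
  by move=> z _; apply: dot_continuous.
have cpP : compact (polyhedron S u c : set (R * R)).
  apply: (subclosed_compact clP (compact_setX (@segment_compact R lo hi) (@segment_compact R lo hi))).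
  move=> z /Pbox [H1 [H2 [H3 H4]]].
  by split; rewrite /= in_itv /=; apply/andP; split; apply/RleP.
have [z Pz zmax] := compact_EVT_max (ex_intro _ z0 Pz0) cpP (continuous_subspaceT (dot_continuous v)).
exists z; split; first by rewrite inE in Pz.
by move=> z' Pz'; apply/RleP; apply: zmax; rewrite inE.
Qed.

End Compactness.

Definition padd (x y : pt) : pt := (fst x + fst y, snd x + snd y).
Definition pscale (t : R) (x : pt) : pt := (t * fst x, t * snd x).
Definition pmix (t : R) (x y : pt) : pt := padd (pscale t x) (pscale (1 - t) y).
Definition cross (u w : pt) : R := fst u * snd w - snd u * fst w.

Lemma dot_comm x y : dot x y = dot y x.
Proof. unfold dot; ring. Qed.

Lemma dot_psub x y v : dot (psub x y) v = dot x v - dot y v.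
Proof. unfold dot, psub; simpl; ring. Qed.

Lemma dot_padd x y v : dot (padd x y) v = dot x v + dot y v.
Proof. unfold dot, padd; simpl; ring. Qed.

Lemma dot_pscale t x v : dot (pscale t x) v = t * dot x v.
Proof. unfold dot, pscale; simpl; ring. Qed.

Lemma sin_INR_mul_PI g : sin (INR g * PI) = 0.
Proof.
  induction g as [|g IH]; [simpl; rewrite Rmult_0_l; apply sin_0|].
  rewrite S_INR, Rmult_plus_distr_r, Rmult_1_l, neg_sin, IH; ring.
Qed.

Lemma cos_INR_mul_PI_sqr g : cos (INR g * PI) * cos (INR g * PI) = 1.
Proof.
  pose proof (sin2_cos2 (INR g * PI)) as H.
  rewrite sin_INR_mul_PI in H; unfold Rsqr in H; lra.
Qed.

Lemma cross_decomp e1 e2 z :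
  cross e1 e2 * fst z = - cross e2 z * fst e1 + cross e1 z * fst e2 /\
  cross e1 e2 * snd z = - cross e2 z * snd e1 + cross e1 z * snd e2.
Proof. unfold cross; split; ring. Qed.

Lemma sum_lin_comb (a b g : nat -> R) t s N :
  sum_f_R0 (fun i => (t * a i + s * b i) * g i) N =
  t * sum_f_R0 (fun i => a i * g i) N + s * sum_f_R0 (fun i => b i * g i) N.
Proof. rewrite !scal_sum, <- plus_sum; apply sum_eq; intros; ring. Qed.

Lemma sum_indicator (a N : nat) (f : nat -> R) : (a <= N)%nat ->
  sum_f_R0 (fun i => (if Nat.eqb i a then 1 else 0) * f i) N = f a.
Proof.
  induction N as [|N IH]; intro Ha.
  - replace a with 0%nat by lia; simpl; ring.
  - rewrite tech5; destruct (Nat.eq_dec a (S N)) as [->|Hne].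
    + rewrite Nat.eqb_refl, (sum_eq _ (fun _ => 0)), sum_cte; [ring|].
      intros i Hi; destruct (Nat.eqb_spec i (S N)); [lia|ring].
    + rewrite IH by lia; destruct (Nat.eqb_spec (S N) a); [lia|ring].
Qed.

Lemma weighted_sum_ge (w g : nat -> R) N lo :
  (forall i, (i <= N)%nat -> 0 <= w i) -> sum_f_R0 w N = 1 ->
  (forall i, (i <= N)%nat -> lo <= g i) -> lo <= sum_f_R0 (fun i => w i * g i) N.
Proof.
  intros Hw Hs Hg.
  replace lo with (sum_f_R0 (fun i => w i * lo) N) by (rewrite <- scal_sum, Hs; ring).
  apply sum_Rle; intros i Hi; apply Rmult_le_compat_l; auto.
Qed.

Lemma weighted_sum_le (w g : nat -> R) N hi :
  (forall i, (i <= N)%nat -> 0 <= w i) -> sum_f_R0 w N = 1 ->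
  (forall i, (i <= N)%nat -> g i <= hi) -> sum_f_R0 (fun i => w i * g i) N <= hi.
Proof.
  intros Hw Hs Hg.
  replace hi with (sum_f_R0 (fun i => w i * hi) N) by (rewrite <- scal_sum, Hs; ring).
  apply sum_Rle; intros i Hi; apply Rmult_le_compat_l; auto.
Qed.

Lemma dot_weighted_sum (w : nat -> R) (q : nat -> pt) N z u :
  fst z = sum_f_R0 (fun i => w i * fst (q i)) N ->
  snd z = sum_f_R0 (fun i => w i * snd (q i)) N ->
  dot z u = sum_f_R0 (fun i => w i * dot (q i) u) N.
Proof.
  intros Hx Hy; unfold dot at 1; rewrite Hx, Hy.
  rewrite (Rmult_comm (sum_f_R0 _ N)), (Rmult_comm (sum_f_R0 _ N)), !scal_sum, <- plus_sum.
  apply sum_eq; intros; unfold dot; ring.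
Qed.

Lemma sign_change (f : nat -> R) a t : 0 <= f a -> f (a + t)%nat < 0 ->
  exists s, 0 <= f (a + s)%nat /\ f (a + s + 1)%nat <= 0.
Proof.
  intro Ha; induction t as [|t IH]; intro Ht.
  - rewrite Nat.add_0_r in Ht; lra.
  - destruct (Rle_lt_dec 0 (f (a + t)%nat)) as [H|H]; [|now apply IH].
    exists t; split; [exact H|]; replace (a + t + 1)%nat with (a + S t)%nat by lia; lra.
Qed.

Lemma psub_origin x : psub x (0, 0) = x.
Proof. destruct x as [x y]; unfold psub; simpl; f_equal; ring. Qed.

Lemma exists_max_below (Q : nat -> Prop) N : (exists t, (t <= N)%nat /\ Q t) ->
  exists t, (t <= N)%nat /\ Q t /\ forall t', (t' <= N)%nat -> Q t' -> (t' <= t)%nat.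
Proof.
  induction N as [|N IH]; intros [t [Ht Qt]].
  - exists t; repeat split; auto; intros; lia.
  - destruct (classic (Q (S N))) as [HS|HS]; [exists (S N); repeat split; auto; intros; lia|].
    assert (t <> S N) by (intros ->; contradiction).
    destruct IH as [t0 (H0 & Q0 & M0)]; [exists t; split; [lia|exact Qt]|].
    exists t0; repeat split; auto.
    intros t' Ht' Qt'; assert (t' <> S N) by (intros ->; contradiction); apply M0; auto; lia.
Qed.

Lemma uniform_pos_bound (Q : nat -> R -> Prop) N :
  (forall i e e', Q i e -> 0 < e' <= e -> Q i e') ->
  (forall i, (i < N)%nat -> exists e, 0 < e /\ Q i e) ->
  exists e, 0 < e /\ forall i, (i < N)%nat -> Q i e.
Proof.
  intros Hmono; induction N as [|N IH]; intro H; [exists 1; split; [lra | intros; lia]|].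
  destruct IH as [e1 [He1 H1]]; [intros i Hi; apply H; lia|].
  destruct (H N ltac:(lia)) as [e2 [He2 H2]].
  assert (Hmin : 0 < Rmin e1 e2) by (apply Rmin_glb_lt; lra).
  exists (Rmin e1 e2); split; [exact Hmin|].
  intros i Hi; destruct (Nat.eq_dec i N) as [->|Hne].
  - apply (Hmono N e2); [exact H2 | split; [exact Hmin | apply Rmin_r]].
  - apply (Hmono i e1); [apply H1; lia | split; [exact Hmin | apply Rmin_l]].
Qed.

Lemma small_step_stays_above X D lo : lo <= X -> (X = lo -> 0 <= D) ->
  exists e, 0 < e /\ forall e', 0 < e' <= e -> lo <= X + e' * D.
Proof.
  intros HX HD.
  destruct (Rle_lt_dec 0 D) as [Dpos|Dneg].
  - exists 1; split; [lra|]; intros e' He'; nra.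
  - assert (Hslack : lo < X) by (destruct (Req_dec X lo) as [E|]; [specialize (HD E); lra | lra]).
    exists ((X - lo) / - D); split; [apply Rdiv_lt_0_compat; lra|].
    intros e' [He' Hle]; apply (Rmult_le_compat_r (- D)) in Hle; [|lra].
    unfold Rdiv in Hle; rewrite Rmult_assoc, Rinv_l in Hle; lra.
Qed.

Section RegularPolygon.
Variables k m : nat.
Hypothesis k_eq : k = (2 * m + 1)%nat.
Hypothesis m_ge2 : (2 <= m)%nat.

Definition theta : R := 2 * PI / INR k.
Definition vangle (i : nat) : R := PI / 2 + INR i * theta.

Lemma INR_k : INR k = 2 * INR m + 1.
Proof. rewrite k_eq, plus_INR, mult_INR; simpl; lra. Qed.

Lemma INR_m_ge2 : 2 <= INR m.
Proof. replace 2 with (INR 2) by (simpl; lra); apply le_INR; lia. Qed.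

Lemma INR_k_pos : 0 < INR k.
Proof. rewrite INR_k; pose proof INR_m_ge2; lra. Qed.

Lemma k_theta : INR k * theta = 2 * PI.
Proof. unfold theta; field; apply Rgt_not_eq, INR_k_pos. Qed.

Lemma m_theta : INR m * theta = PI - theta / 2.
Proof. pose proof k_theta as H; rewrite INR_k in H; lra. Qed.

Lemma theta_pos : 0 < theta.
Proof. apply Rdiv_lt_0_compat; [pose proof PI_RGT_0; lra | apply INR_k_pos]. Qed.

Lemma theta_le : theta <= 2 * PI / 5.
Proof.
  apply Rmult_le_compat_l; [pose proof PI_RGT_0; lra|].
  apply Rinv_le_contravar; [lra|]; rewrite INR_k; pose proof INR_m_ge2; lra.
Qed.

Lemma INR_le_m r : (r <= m)%nat -> 0 <= INR r <= INR m.
Proof. split; [apply pos_INR | apply le_INR; lia]. Qed.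

Lemma rho_cos : rho k = cos (theta / 2).
Proof. unfold rho, theta; f_equal; field; apply Rgt_not_eq, INR_k_pos. Qed.

Lemma rho_pos : 0 < rho k.
Proof.
  rewrite rho_cos; pose proof theta_pos; pose proof theta_le; pose proof PI_RGT_0.
  apply cos_gt_0; lra.
Qed.

Lemma rho_lt_1 : rho k < 1.
Proof.
  rewrite rho_cos, <- cos_0; pose proof theta_pos; pose proof theta_le; pose proof PI_RGT_0.
  apply cos_decreasing_1; lra.
Qed.

Lemma vtx_polar i : vtx k i = (cos (vangle i), sin (vangle i)).
Proof. unfold vtx, vangle, theta; f_equal; f_equal; field; apply Rgt_not_eq, INR_k_pos. Qed.

Lemma vtx_add_mul_k i q : vtx k (i + q * k) = vtx k i.
Proof.
  rewrite !vtx_polar; unfold vangle; rewrite plus_INR, mult_INR.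
  replace (PI / 2 + (INR i + INR q * INR k) * theta)
    with (PI / 2 + INR i * theta + 2 * INR q * PI)
    by (replace (2 * INR q * PI) with (INR q * (2 * PI)) by ring; rewrite <- k_theta; ring).
  rewrite cos_period, sin_period; reflexivity.
Qed.

Lemma vtx_add_k i : vtx k (i + k) = vtx k i.
Proof. rewrite <- (vtx_add_mul_k i 1); f_equal; lia. Qed.

Lemma vtx_mod i : vtx k i = vtx k (i mod k).
Proof.
  rewrite (Nat.div_mod_eq i k) at 1.
  rewrite Nat.add_comm, Nat.mul_comm; apply vtx_add_mul_k.
Qed.

Lemma vtx_eq_mod a b : a mod k = b mod k -> vtx k a = vtx k b.
Proof. intro E; rewrite (vtx_mod a), (vtx_mod b), E; reflexivity. Qed.

Lemma vtx_shift e a : exists r, (r < k)%nat /\ vtx k a = vtx k (e + r).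
Proof.
  exists ((a + (k - 1) * e) mod k); split; [apply Nat.mod_upper_bound; lia|].
  apply vtx_eq_mod; rewrite Nat.Div0.add_mod_idemp_r.
  replace (e + (a + (k - 1) * e))%nat with (a + e * k)%nat by (rewrite k_eq; lia).
  symmetry; apply Nat.Div0.mod_add.
Qed.

Lemma dot_vtx a b : dot (vtx k a) (vtx k b) = cos ((INR a - INR b) * theta).
Proof.
  rewrite !vtx_polar; unfold dot; simpl.
  replace ((INR a - INR b) * theta) with (vangle a - vangle b) by (unfold vangle; ring).
  rewrite cos_minus; ring.
Qed.

Lemma cross_vtx a b : cross (vtx k a) (vtx k b) = sin ((INR b - INR a) * theta).
Proof.
  rewrite !vtx_polar; unfold cross; simpl.
  replace ((INR b - INR a) * theta) with (vangle b - vangle a) by (unfold vangle; ring).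
  rewrite sin_minus; ring.
Qed.

Lemma cos_m_theta : cos (INR m * theta) = - rho k.
Proof.
  rewrite m_theta, rho_cos, <- (cos_neg (theta / 2)), <- neg_cos; f_equal; ring.
Qed.

Lemma cos_m1_theta : cos (INR (m + 1) * theta) = - rho k.
Proof.
  rewrite plus_INR, Rmult_plus_distr_r, m_theta, rho_cos; simpl INR.
  rewrite Rmult_1_l, <- neg_cos; f_equal; lra.
Qed.

Lemma cos_mul_theta_ge r : (r <= m)%nat -> - rho k <= cos (INR r * theta).
Proof.
  intro Hr; rewrite <- cos_m_theta; pose proof theta_pos; pose proof m_theta; pose proof PI_RGT_0.
  destruct (INR_le_m r Hr) as [Hr0 Hrm].
  destruct (Req_dec (INR r) (INR m)) as [->|Hne]; [lra|].
  left; apply cos_decreasing_1; nra.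
Qed.

Lemma cos_reflect_k s : cos ((INR k - s) * theta) = cos (s * theta).
Proof.
  replace ((INR k - s) * theta) with (2 * PI - s * theta) by (rewrite <- k_theta; ring).
  rewrite cos_minus, cos_2PI, sin_2PI; ring.
Qed.

Lemma dot_vtx_shift b r : dot (vtx k (b + r)) (vtx k b) = cos (INR r * theta).
Proof. rewrite dot_vtx, plus_INR; f_equal; ring. Qed.

Lemma dot_vtx_ge a b : - rho k <= dot (vtx k a) (vtx k b).
Proof.
  destruct (vtx_shift b a) as [r [Hr ->]]; rewrite dot_vtx_shift.
  destruct (le_lt_dec r m) as [Hl|Hl]; [now apply cos_mul_theta_ge|].
  replace (INR r) with (INR k - INR (k - r)) by (rewrite minus_INR by lia; ring).
  rewrite cos_reflect_k; apply cos_mul_theta_ge; lia.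
Qed.

Lemma sin_mul_theta_ge0 r : (r <= m)%nat -> 0 <= sin (INR r * theta).
Proof.
  intro Hr; destruct (INR_le_m r Hr); pose proof theta_pos; pose proof m_theta.
  apply sin_ge_0; nra.
Qed.

Lemma sin_mul_theta_pos r : (1 <= r <= m)%nat -> 0 < sin (INR r * theta).
Proof.
  intro Hr; destruct (INR_le_m r ltac:(lia)); pose proof theta_pos; pose proof m_theta.
  assert (1 <= INR r) by (replace 1 with (INR 1) by reflexivity; apply le_INR; lia).
  apply sin_gt_0; nra.
Qed.

(* From [sin (S+T) e(psi) = sin T e(psi - S) + sin S e(psi + T)], [e(psi)] the unit
   vector at angle [psi]. *)
Lemma dot_vtx_cone z a r s : (s <= r)%nat ->
  sin (INR r * theta) * dot z (vtx k (a + s)) =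
  sin (INR (r - s) * theta) * dot z (vtx k a) + sin (INR s * theta) * dot z (vtx k (a + r)).
Proof.
  intro Hs; rewrite !vtx_polar; unfold dot; simpl.
  replace (INR r * theta) with (INR s * theta + INR (r - s) * theta)
    by (rewrite minus_INR by lia; ring).
  replace (vangle a) with (vangle (a + s) - INR s * theta)
    by (unfold vangle; rewrite plus_INR; ring).
  replace (vangle (a + r)) with (vangle (a + s) + INR (r - s) * theta)
    by (unfold vangle; rewrite !plus_INR, minus_INR by lia; ring).
  rewrite sin_plus, !cos_minus, !cos_plus, !sin_minus, !sin_plus; ring.
Qed.

Lemma dot_vtx_cone_ge0 z a r s : (1 <= r <= m)%nat -> (s <= r)%nat ->
  0 <= dot z (vtx k a) -> 0 <= dot z (vtx k (a + r)) -> 0 <= dot z (vtx k (a + s)).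
Proof.
  intros Hr Hs Ha Har.
  pose proof (dot_vtx_cone z a r s Hs) as E.
  pose proof (sin_mul_theta_pos r Hr).
  pose proof (sin_mul_theta_ge0 (r - s) ltac:(lia)).
  pose proof (sin_mul_theta_ge0 s ltac:(lia)).
  nra.
Qed.

(* [v i + v (i+g) = 2 cos (g theta / 2) u] for the unit vector [u] at angle
   [vangle i + g theta / 2], and [v (i + g (m+1)) = (-1)^g u]. *)
Lemma dot_vtx_pair z i g :
  dot z (vtx k i) + dot z (vtx k (i + g)) =
  2 * cos (INR g * theta / 2) * cos (INR g * PI) * dot z (vtx k (i + g * (m + 1))).
Proof.
  rewrite !vtx_polar; unfold dot; simpl.
  set (A := vangle i + INR g * theta / 2).
  replace (vangle i) with (A - INR g * theta / 2) by (unfold A; ring).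
  replace (vangle (i + g)) with (A + INR g * theta / 2)
    by (unfold A, vangle; rewrite plus_INR; field).
  replace (vangle (i + g * (m + 1))) with (A + INR g * PI).
  2:{ unfold A, vangle; rewrite plus_INR, mult_INR, plus_INR; simpl INR.
      pose proof m_theta; nra. }
  pose proof (cos_INR_mul_PI_sqr g) as Hs.
  rewrite (cos_plus A (INR g * PI)), (sin_plus A (INR g * PI)), sin_INR_mul_PI.
  rewrite (cos_minus A), (sin_minus A), (cos_plus A), (sin_plus A).
  set (c := cos (INR g * PI)) in *.
  transitivity (c * c * (2 * cos (INR g * theta / 2) * (fst z * cos A + snd z * sin A))).
  - rewrite Hs; ring.
  - ring.
Qed.

Lemma dot_vtx_pair_far d i g : (1 <= g <= m)%nat ->
  rho k <= dot d (vtx k i) -> rho k <= dot d (vtx k (i + g)) ->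
  1 <= Rabs (dot d (vtx k (i + g * (m + 1)))).
Proof.
  intros Hg Hi Hig.
  pose proof (dot_vtx_pair d i g) as E.
  set (D := dot d (vtx k (i + g * (m + 1)))) in *.
  set (c := cos (INR g * theta / 2)) in *.
  set (s := cos (INR g * PI)) in *.
  pose proof (cos_INR_mul_PI_sqr g) as Hs; fold s in Hs.
  pose proof rho_pos; pose proof theta_pos; pose proof m_theta.
  destruct (INR_le_m g ltac:(lia)).
  assert (1 <= INR g) by (replace 1 with (INR 1) by reflexivity; apply le_INR; lia).
  assert (Hc0 : 0 <= c) by (unfold c; apply cos_ge_0; nra).
  assert (Hc1 : c <= rho k).
  { rewrite rho_cos; unfold c.
    destruct (Req_dec (INR g) 1) as [->|Hne]; [right; f_equal; field|].
    left; apply cos_decreasing_1; nra. }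
  assert (HsD : 1 <= s * D).
  { destruct (Rle_lt_dec 1 (s * D)) as [|Hlt]; [assumption|].
    destruct (Rle_lt_dec (s * D) 0); nra. }
  assert (1 <= D * D) by nra.
  destruct (Rle_lt_dec 0 D); [rewrite Rabs_right|rewrite Rabs_left]; nra.
Qed.

Lemma vtx_balance z :
  2 * rho k * dot z (vtx k 0) + dot z (vtx k m) + dot z (vtx k (m + 1)) = 0.
Proof.
  pose proof (dot_vtx_pair z m 1) as E.
  replace (m + 1 * (m + 1))%nat with (0 + k)%nat in E by lia.
  rewrite vtx_add_k in E; simpl INR in E.
  rewrite !Rmult_1_l, cos_PI, <- rho_cos in E; lra.
Qed.

Definition push (e : nat) : pt := padd (vtx k e) (vtx k (e + m)).

Lemma dot_push_ge0 e r : (r <= m)%nat -> 0 <= dot (push e) (vtx k (e + r)).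
Proof.
  intro Hr; unfold push; rewrite dot_padd, !dot_vtx, !plus_INR.
  destruct (INR_le_m r Hr); pose proof theta_pos; pose proof m_theta.
  rewrite form1; apply Rmult_le_pos; [apply Rmult_le_pos; [lra|]|]; apply cos_ge_0; nra.
Qed.

Lemma dot_push_pos c t : (t <= m)%nat -> 0 < dot (push (c + t + m + 1)) (vtx k c).
Proof.
  intro Ht; unfold push.
  replace (c + t + m + 1 + m)%nat with (c + t + k)%nat by lia.
  rewrite vtx_add_k, dot_padd, !dot_vtx, !plus_INR; simpl INR.
  destruct (INR_le_m t Ht); pose proof theta_pos; pose proof m_theta.
  replace ((INR c + INR t + INR m + 1 - INR c) * theta) with ((INR t + INR m + 1) * theta) by ring.
  replace ((INR c + INR t - INR c) * theta) with (INR t * theta) by ring.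
  rewrite form1.
  assert (cos (((INR t + INR m + 1) * theta - INR t * theta) / 2) < 0) by (apply cos_lt_0; nra).
  assert (cos (((INR t + INR m + 1) * theta + INR t * theta) / 2) < 0) by (apply cos_lt_0; nra).
  nra.
Qed.

Lemma inK_dot_ge z a : inK k z -> - rho k <= dot z (vtx k a).
Proof.
  intros [w (Hw & Hs & Hx & Hy)].
  rewrite (dot_weighted_sum w (vtx k) (k - 1) z _ Hx Hy).
  apply weighted_sum_ge; [intros; apply Hw; lia | exact Hs | intros; apply dot_vtx_ge].
Qed.

Lemma inK_box z : inK k z -> -1 <= fst z <= 1 /\ -1 <= snd z <= 1.
Proof.
  intros [w (Hw & Hs & Hx & Hy)].
  assert (Hw' : forall i, (i <= k - 1)%nat -> 0 <= w i) by (intros; apply Hw; lia).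
  rewrite Hx, Hy; unfold vtx; simpl.
  split; split;
    [apply weighted_sum_ge | apply weighted_sum_le | apply weighted_sum_ge | apply weighted_sum_le];
    auto; intros; first [apply COS_bound | apply SIN_bound].
Qed.

Lemma inK_vtx a : (a < k)%nat -> inK k (vtx k a).
Proof.
  intro Ha; exists (fun i => if Nat.eqb i a then 1 else 0).
  assert (E : forall f, sum_f_R0 (fun i => (if Nat.eqb i a then 1 else 0) * f i) (k - 1) = f a)
    by (intro; apply sum_indicator; lia).
  split; [intros i _; destruct (Nat.eqb i a); lra|].
  split; [|split; symmetry; apply E].
  transitivity (sum_f_R0 (fun i => (if Nat.eqb i a then 1 else 0) * 1) (k - 1)); [|apply E].
  apply sum_eq; intros; rewrite Rmult_1_r; reflexivity.
Qed.

Lemma inK_convex t x y : 0 <= t <= 1 -> inK k x -> inK k y -> inK k (pmix t x y).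
Proof.
  intros Ht [wx (Hwx & Hsx & Hxx & Hyx)] [wy (Hwy & Hsy & Hxy & Hyy)].
  exists (fun i => t * wx i + (1 - t) * wy i).
  split; [intros i Hi; pose proof (Hwx i Hi); pose proof (Hwy i Hi); nra|].
  unfold pmix, padd, pscale; simpl.
  rewrite !sum_lin_comb, Hxx, Hyx, Hxy, Hyy.
  split; [|split; reflexivity].
  transitivity (sum_f_R0 (fun i => (t * wx i + (1 - t) * wy i) * 1) (k - 1));
    [apply sum_eq; intros; ring|].
  rewrite sum_lin_comb, (sum_eq (fun i => wx i * 1) wx), (sum_eq (fun i => wy i * 1) wy), Hsx, Hsy
    by (intros; ring); ring.
Qed.

Lemma inK_origin : inK k (0, 0).
Proof.
  pose proof rho_pos.
  set (c := rho k / (rho k + 1)).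
  assert (Ec : c * (rho k + 1) = rho k) by (unfold c; field; lra).
  replace (0, 0) with (pmix c (vtx k 0) (pmix (1 / 2) (vtx k m) (vtx k (m + 1)))).
  - apply inK_convex; [nra | apply inK_vtx; lia |].
    apply inK_convex; [lra | apply inK_vtx; lia | apply inK_vtx; lia].
  - assert (Bx : 2 * rho k * fst (vtx k 0) + fst (vtx k m) + fst (vtx k (m + 1)) = 0).
    { rewrite <- (vtx_balance (1, 0)); unfold dot; simpl fst; simpl snd; ring. }
    assert (By : 2 * rho k * snd (vtx k 0) + snd (vtx k m) + snd (vtx k (m + 1)) = 0).
    { rewrite <- (vtx_balance (0, 1)); unfold dot; simpl fst; simpl snd; ring. }
    unfold pmix, padd, pscale, c; cbn [fst snd]; f_equal; field_simplify;
      try (rewrite ?Bx, ?By; unfold Rdiv; ring); lra.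
Qed.

Lemma cross_vtx_sign_change z : z <> (0, 0) ->
  exists a, (a < k)%nat /\ 0 <= cross (vtx k a) z /\ cross (vtx k (a + 1)) z <= 0.
Proof.
  intro Hz.
  set (f := fun a => cross (vtx k a) z).
  assert (Hbal : 2 * rho k * f 0%nat + f m + f (m + 1)%nat = 0).
  { rewrite <- (vtx_balance (snd z, - fst z)); unfold f, cross, dot; simpl fst; simpl snd; ring. }
  pose proof rho_pos.
  assert (Hneg : exists b, f b < 0).
  { destruct (Rlt_le_dec (f 0%nat) 0) as [|H0]; [now exists 0%nat|].
    destruct (Rlt_le_dec (f m) 0) as [|Hm]; [now exists m|].
    destruct (Rlt_le_dec (f (m + 1)%nat) 0) as [|Hm1]; [now exists (m + 1)%nat|].
    exfalso; apply Hz.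
    assert (0 <= rho k * f 0%nat) by (apply Rmult_le_pos; lra).
    assert (E0 : f 0%nat = 0).
    { apply (Rmult_eq_reg_l (rho k)); [|lra]; lra. }
    assert (Em : f m = 0) by lra.
    destruct (cross_decomp (vtx k 0) (vtx k m) z) as [Ex Ey].
    rewrite cross_vtx in Ex, Ey; fold (f 0%nat) (f m) in Ex, Ey; rewrite E0, Em in Ex, Ey.
    replace (INR m - INR 0) with (INR m) in Ex, Ey by (simpl; ring).
    pose proof (sin_mul_theta_pos m ltac:(lia)).
    destruct z as [x y]; cbn [fst snd] in Ex, Ey.
    f_equal; apply (Rmult_eq_reg_l (sin (INR m * theta))); lra. }
  assert (Hpos : exists a, 0 <= f a).
  { destruct (Rle_lt_dec 0 (f 0%nat)) as [|H0]; [now exists 0%nat|].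
    destruct (Rle_lt_dec 0 (f m)) as [|Hm]; [now exists m|].
    assert (0 < rho k * - f 0%nat) by (apply Rmult_lt_0_compat; lra).
    exists (m + 1)%nat; lra. }
  destruct Hneg as [b Hb], Hpos as [a0 Ha0].
  destruct (vtx_shift a0 b) as [t [_ Ht]].
  assert (Hf : f (a0 + t)%nat < 0) by (unfold f; rewrite <- Ht; exact Hb).
  destruct (sign_change f a0 t Ha0 Hf) as [s [H1 H2]].
  exists ((a0 + s) mod k); split; [apply Nat.mod_upper_bound; lia|].
  unfold f in H1, H2; rewrite <- vtx_mod; split; [exact H1|].
  rewrite (vtx_eq_mod _ (a0 + s + 1)); [exact H2|].
  apply Nat.Div0.add_mod_idemp_l.
Qed.

Lemma cone_decomp z : z <> (0, 0) -> exists a al be,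
  (a < k)%nat /\ 0 <= al /\ 0 <= be /\ z = padd (pscale al (vtx k a)) (pscale be (vtx k (a + 1))).
Proof.
  intro Hz; destruct (cross_vtx_sign_change z Hz) as [a (Ha & Hca & Hcb)].
  assert (Hs : cross (vtx k a) (vtx k (a + 1)) = sin theta)
    by (rewrite cross_vtx, plus_INR; simpl INR; f_equal; ring).
  assert (Hsin : 0 < sin theta)
    by (pose proof (sin_mul_theta_pos 1 ltac:(lia)) as P; simpl INR in P; rewrite Rmult_1_l in P; exact P).
  exists a, (- cross (vtx k (a + 1)) z / sin theta), (cross (vtx k a) z / sin theta).
  split; [exact Ha|]; split; [apply Rle_mult_inv_pos; lra|]; split; [apply Rle_mult_inv_pos; lra|].
  destruct (cross_decomp (vtx k a) (vtx k (a + 1)) z) as [Ex Ey]; rewrite Hs in Ex, Ey.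
  destruct z as [x y]; unfold padd, pscale; simpl fst in *; simpl snd in *.
  f_equal; apply (Rmult_eq_reg_l (sin theta)); try lra; rewrite Ex || rewrite Ey; field; lra.
Qed.

Lemma dot_vtx_antipodal a :
  dot (vtx k a) (vtx k (a + (m + 1))) = - rho k /\ dot (vtx k (a + 1)) (vtx k (a + (m + 1))) = - rho k.
Proof.
  rewrite (dot_comm (vtx k a)), (dot_comm (vtx k (a + 1))), dot_vtx_shift, cos_m1_theta.
  replace (a + (m + 1))%nat with (a + 1 + m)%nat by lia.
  rewrite dot_vtx_shift, cos_m_theta; split; reflexivity.
Qed.

Lemma inK_of_dot_ge z : (forall a, (a < k)%nat -> - rho k <= dot z (vtx k a)) -> inK k z.
Proof.
  intro Hdot.
  destruct (classic (z = (0, 0))) as [->|Hz]; [exact inK_origin|].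
  destruct (cone_decomp z Hz) as (a & al & be & Ha & Hal & Hbe & Ez).
  pose proof rho_pos.
  assert (Hsum : al + be <= 1).
  { destruct (dot_vtx_antipodal a) as [D1 D2].
    pose proof (Hdot ((a + (m + 1)) mod k) ltac:(apply Nat.mod_upper_bound; lia)) as Ha'.
    rewrite <- vtx_mod, Ez, dot_padd, !dot_pscale, D1, D2 in Ha'.
    apply (Rmult_le_reg_l (rho k)); lra. }
  assert (Hpos : 0 < al + be).
  { destruct (Rle_lt_dec (al + be) 0); [|assumption].
    assert (al = 0) by lra; assert (be = 0) by lra; subst al be.
    exfalso; apply Hz; rewrite Ez; unfold padd, pscale; cbn [fst snd]; f_equal; ring. }
  assert (Hfrac : 0 <= al / (al + be) <= 1).
  { split; [apply Rle_mult_inv_pos; lra|].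
    apply (Rmult_le_reg_r (al + be)); [lra|]; unfold Rdiv; rewrite Rmult_assoc, Rinv_l; lra. }
  set (inner := pmix (al / (al + be)) (vtx k a) (vtx k ((a + 1) mod k))).
  replace z with (pmix (al + be) inner (0, 0)).
  - apply inK_convex; [lra | | exact inK_origin].
    apply inK_convex; [exact Hfrac | apply inK_vtx; lia | apply inK_vtx, Nat.mod_upper_bound; lia].
  - unfold inner; rewrite <- vtx_mod, Ez; unfold pmix, padd, pscale; simpl fst; simpl snd.
    f_equal; field; lra.
Qed.

Lemma inK_iff z : inK k z <-> forall a, - rho k <= dot z (vtx k a).
Proof.
  split; [intros Hz a; now apply inK_dot_ge|].
  intro H; apply inK_of_dot_ge; auto.
Qed.

Section Process.
Variable p : nat -> pt.
Variable n : nat.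
Hypothesis p_adm : admissible k p.

(* [K_n] is the intersection of the translates [center j + K], [j <= n]. *)
Definition center (j : nat) : pt := if Nat.eqb j 0 then (0, 0) else p j.

Lemma inKn_iff x :
  inKn k p n x <-> forall j a, (j <= n)%nat -> - rho k <= dot (psub x (center j)) (vtx k a).
Proof.
  unfold center; split.
  - intros [H0 Hj] j a Hjn; destruct (Nat.eqb_spec j 0) as [->|Hj0].
    + rewrite psub_origin; now apply inK_dot_ge.
    + apply inK_dot_ge, Hj; lia.
  - intro H; split.
    + apply inK_iff; intro a; rewrite <- (psub_origin x); apply (H 0%nat); lia.
    + intros j Hj; apply inK_iff; intro a.
      specialize (H j a ltac:(lia)); destruct (Nat.eqb_spec j 0); [lia | exact H].
Qed.

Lemma inKn_polyhedron x :
  inKn k p n x <->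
  polyhedron (fun ja : nat * nat => (fst ja <= n)%nat) (fun ja => vtx k (snd ja))
    (fun ja => - rho k + dot (center (fst ja)) (vtx k (snd ja))) x.
Proof.
  rewrite inKn_iff; unfold polyhedron; split.
  - intros H [j a] Hj; specialize (H j a Hj); rewrite dot_psub in H; simpl; lra.
  - intros H j a Hj; specialize (H (j, a) Hj); rewrite dot_psub; simpl in H; lra.
Qed.

Lemma exists_max_Kn v : exists M, inKn k p n M /\ forall z, inKn k p n z -> dot z v <= dot M v.
Proof.
  destruct (Compactness.dot_max_on_bounded_polyhedron (nat * nat) _ _ _ v (p (S n)) (-1) 1
              (proj1 (inKn_polyhedron _) (p_adm n))) as [M [HM Hmax]].
  - intros z Hz; apply inKn_polyhedron in Hz; destruct Hz as [Hz _].
    destruct (inK_box z Hz); lra.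
  - exists M; split; [now apply inKn_polyhedron|].
    intros z Hz; apply Hmax, inKn_polyhedron, Hz.
Qed.

Lemma exists_min_Kn v : exists M, inKn k p n M /\ forall z, inKn k p n z -> dot M v <= dot z v.
Proof.
  destruct (exists_max_Kn (- fst v, - snd v)) as [M [HM Hmax]].
  exists M; split; [exact HM|].
  intros z Hz; specialize (Hmax z Hz); unfold dot in *; simpl in *; lra.
Qed.

Definition tight (M : pt) (j : nat) (v : pt) : Prop := dot (psub M (center j)) v = - rho k.

Definition minimizer (M v : pt) : Prop := inKn k p n M /\ forall z, inKn k p n z -> dot M v <= dot z v.

Lemma tight_minimizer M j a : inKn k p n M -> (j <= n)%nat -> tight M j (vtx k a) ->
  minimizer M (vtx k a).
Proof.
  intros HM Hj Ht; split; [exact HM|]; intros z Hz.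
  pose proof (proj1 (inKn_iff z) Hz j a Hj); unfold tight in Ht; rewrite dot_psub in *; lra.
Qed.

Lemma minimizer_cone M a r s : (1 <= r <= m)%nat -> (s <= r)%nat ->
  minimizer M (vtx k a) -> minimizer M (vtx k (a + r)) -> minimizer M (vtx k (a + s)).
Proof.
  intros Hr Hs [HM Ha] [_ Har]; split; [exact HM|]; intros z Hz.
  pose proof (dot_vtx_cone_ge0 (psub z M) a r s Hr Hs) as H.
  rewrite !dot_psub in H; specialize (Ha z Hz); specialize (Har z Hz); lra.
Qed.

Lemma push_stays_in_Kn M e : inKn k p n M ->
  (forall j a, (j <= n)%nat -> tight M j (vtx k a) -> exists r, (r <= m)%nat /\ vtx k a = vtx k (e + r)) ->
  exists eps, 0 < eps /\ inKn k p n (padd M (pscale eps (push e))).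
Proof.
  intros HM Htight.
  set (X j a := dot (psub M (center j)) (vtx k a)).
  set (Q j eps := forall a, (a < k)%nat -> forall e', 0 < e' <= eps ->
                    - rho k <= X j a + e' * dot (push e) (vtx k a)).
  destruct (uniform_pos_bound Q (S n)) as [eps [Heps HQ]].
  - intros j e1 e2 H1 H2 a Ha e' He'; apply H1; [exact Ha | lra].
  - intros j Hj.
    destruct (uniform_pos_bound (fun a eps => forall e', 0 < e' <= eps ->
                - rho k <= X j a + e' * dot (push e) (vtx k a)) k) as [eps [Heps Hall]].
    + intros a e1 e2 H1 H2 e' He'; apply H1; lra.
    + intros a Ha; apply small_step_stays_above; [apply inKn_iff; auto; lia|].
      intro Htj; destruct (Htight j a ltac:(lia) Htj) as [r [Hr ->]]; now apply dot_push_ge0.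
    + exists eps; split; [exact Heps|]; intros a Ha; apply Hall, Ha.
  - exists eps; split; [exact Heps|].
    apply inKn_iff; intros j a Hj; rewrite (vtx_mod a).
    specialize (HQ j ltac:(lia) (a mod k) ltac:(apply Nat.mod_upper_bound; lia) eps ltac:(lra)).
    unfold X in HQ; rewrite !dot_psub, dot_padd, dot_pscale in *; lra.
Qed.

Lemma maximizer_push_nonpos M c e : inKn k p n M ->
  (forall z, inKn k p n z -> dot z (vtx k c) <= dot M (vtx k c)) ->
  (forall j a, (j <= n)%nat -> tight M j (vtx k a) -> exists r, (r <= m)%nat /\ vtx k a = vtx k (e + r)) ->
  dot (push e) (vtx k c) <= 0.
Proof.
  intros HM Hmax Htight.
  destruct (push_stays_in_Kn M e HM Htight) as [eps [Heps Hin]].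
  specialize (Hmax _ Hin); rewrite dot_padd, dot_pscale in Hmax.
  destruct (Rle_lt_dec (dot (push e) (vtx k c)) 0); [assumption|nra].
Qed.

Lemma maximizer_tight_pair M c : inKn k p n M ->
  (forall z, inKn k p n z -> dot z (vtx k c) <= dot M (vtx k c)) ->
  exists j t j' t', (j <= n)%nat /\ (j' <= n)%nat /\ (t <= m)%nat /\ (m + 1 <= t' <= t + m)%nat /\
    tight M j (vtx k (c + t)) /\ tight M j' (vtx k (c + t')).
Proof.
  intros HM Hmax; apply NNPP; intro Hnone.
  set (Act t := exists j, (j <= n)%nat /\ tight M j (vtx k (c + t))).
  assert (Hpair : forall t t', (t <= m)%nat -> (m + 1 <= t' <= t + m)%nat -> Act t -> Act t' -> False)
    by (intros t t' Ht Ht' [j [Hj Hjt]] [j' [Hj' Hjt']]; apply Hnone; exists j, t, j', t'; repeat split; auto; lia).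
  assert (Ht2 : exists t2, (t2 <= m)%nat /\ (forall t, (t <= m)%nat -> Act t -> (t <= t2)%nat) /\
                  forall t', (m + 1 <= t' <= 2 * m)%nat -> Act t' -> (t2 + m + 1 <= t')%nat).
  { destruct (classic (exists t, (t <= m)%nat /\ Act t)) as [Hex|Hnex].
    - destruct (exists_max_below Act m Hex) as [t2 (Ht2 & A2 & M2)].
      exists t2; repeat split; auto.
      intros t' Ht' At'; destruct (le_lt_dec (t2 + m + 1) t'); [assumption|].
      exfalso; apply (Hpair t2 t'); auto; lia.
    - exists 0%nat; repeat split; [lia | |intros; lia].
      intros t Ht At; exfalso; apply Hnex; eauto. }
  destruct Ht2 as [t2 (Ht2 & Tlow & Thigh)].
  apply (Rlt_not_le _ _ (dot_push_pos c t2 Ht2)).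
  apply (maximizer_push_nonpos M c _ HM Hmax).
  intros j a Hj Hja; destruct (vtx_shift c a) as [t [Ht Ea]]; rewrite Ea in Hja |- *.
  assert (At : Act t) by (exists j; auto).
  destruct (le_lt_dec t m) as [Hle|Hlt].
  - exists (t + m - t2)%nat; split; [specialize (Tlow t Hle At); lia|].
    replace (c + t2 + m + 1 + (t + m - t2))%nat with (c + t + k)%nat by (specialize (Tlow t Hle At); lia).
    symmetry; apply vtx_add_k.
  - exists (t - t2 - m - 1)%nat; split; [lia|].
    specialize (Thigh t ltac:(lia) At); f_equal; lia.
Qed.

(* The change region with normal [v], minus the condition [x \in K_n]; [y] attains the
   minimum [alpha'] of [<., v>]. *)
Definition region (x v : pt) : Prop := exists y, minimizer y v /\ dot y v + rho k <= dot x v.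

Section NarrowKn.
Hypothesis Kn_narrow :
  forall l z z', inKn k p n z -> inKn k p n z' -> dot z (vtx k l) - dot z' (vtx k l) < 1.

Lemma regions_common_minimizer x M i g : (1 <= g <= m)%nat -> inKn k p n x ->
  region x (vtx k i) -> region x (vtx k (i + g)) ->
  minimizer M (vtx k i) -> minimizer M (vtx k (i + g)) -> False.
Proof.
  intros Hg Hx [y [[Hy _] Ry]] [y' [[Hy' _] Ry']] [HM Mi] [_ Mig].
  specialize (Mi y Hy); specialize (Mig y' Hy').
  pose proof (dot_vtx_pair_far (psub x M) i g Hg) as Hfar.
  rewrite !dot_psub in Hfar.
  pose proof (Kn_narrow (i + g * (m + 1)) x M Hx HM).
  pose proof (Kn_narrow (i + g * (m + 1)) M x HM Hx).
  assert (Hlt : Rabs (dot x (vtx k (i + g * (m + 1))) - dot M (vtx k (i + g * (m + 1)))) < 1)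
    by (apply Rabs_def1; lra).
  apply (Rlt_not_le _ _ Hlt), Hfar; lra.
Qed.

Lemma region_of_tight x M i g u j : (1 <= g <= m)%nat -> (u <= g)%nat -> (j <= n)%nat ->
  inKn k p n M -> tight M j (vtx k (i + u)) ->
  region x (vtx k i) -> region x (vtx k (i + g)) -> region x (vtx k (i + u)).
Proof.
  intros Hg Hu Hj HM Ht [y [[Hy _] Ry]] [y' [[Hy' _] Ry']].
  exists M; split; [now apply (tight_minimizer M j)|].
  pose proof (proj1 (inKn_iff y) Hy j i Hj) as Ly.
  pose proof (proj1 (inKn_iff y') Hy' j (i + g)%nat Hj) as Ly'.
  pose proof (dot_vtx_cone_ge0 (psub x (center j)) i g u Hg Hu) as Hcone.
  unfold tight in Ht; rewrite !dot_psub in *; lra.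
Qed.

Lemma regions_shrink x i g : (1 <= g <= m)%nat -> inKn k p n x ->
  region x (vtx k i) -> region x (vtx k (i + g)) ->
  exists u, (1 <= u < g)%nat /\ region x (vtx k (i + u)).
Proof.
  intros Hg Hx Ri Rig.
  set (c := (i + m + 1)%nat).
  destruct (exists_max_Kn (vtx k c)) as [M [HM Hmax]].
  destruct (maximizer_tight_pair M c HM Hmax) as (j & t & j' & t' & Hj & Hj' & Ht & Ht' & Tt & Tt').
  assert (Ei : vtx k (c + t + (m - t)) = vtx k i)
    by (rewrite <- (vtx_add_k i); f_equal; unfold c; lia).
  assert (Eu : vtx k (c + t') = vtx k (i + (t' - m)))
    by (rewrite <- (vtx_add_k (i + (t' - m))); f_equal; unfold c; lia).
  destruct (le_lt_dec g (t' - m)) as [Hgu|Hug].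
  - exfalso.
    pose proof (tight_minimizer M j _ HM Hj Tt) as Mt.
    pose proof (tight_minimizer M j' _ HM Hj' Tt') as Mt'.
    replace (c + t')%nat with (c + t + (t' - t))%nat in Mt' by lia.
    apply (regions_common_minimizer x M i g Hg Hx Ri Rig).
    + rewrite <- Ei; apply (minimizer_cone M _ (t' - t)); auto; lia.
    + replace (vtx k (i + g)) with (vtx k (c + t + (m - t + g)))
        by (rewrite <- (vtx_add_k (i + g)); f_equal; unfold c; lia).
      apply (minimizer_cone M _ (t' - t)); auto; lia.
  - exists (t' - m)%nat; split; [lia|].
    rewrite Eu in Tt'; apply (region_of_tight x M i g _ j'); auto; lia.
Qed.

Lemma regions_disjoint_gap x i g : (1 <= g <= m)%nat -> inKn k p n x ->
  region x (vtx k i) -> region x (vtx k (i + g)) -> False.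
Proof.
  induction g as [g IH] using (well_founded_induction lt_wf); intros Hg Hx Ri Rig.
  destruct (regions_shrink x i g Hg Hx Ri Rig) as [u [Hu Riu]].
  apply (IH u (proj2 Hu)); auto; lia.
Qed.

End NarrowKn.

Lemma Kn_narrow_of_heights : (forall i h, (i < k)%nat -> is_height k p n i h -> h < 1) ->
  forall l z z', inKn k p n z -> inKn k p n z' -> dot z (vtx k l) - dot z' (vtx k l) < 1.
Proof.
  intros Hh l z z' Hz Hz'; rewrite (vtx_mod l).
  set (l' := l mod k); assert (Hl' : (l' < k)%nat) by (apply Nat.mod_upper_bound; lia).
  destruct (exists_max_Kn (vtx k l')) as [Mx [HMx Hmx]].
  destruct (exists_min_Kn (vtx k l')) as [Mn [HMn Hmn]].
  assert (Hw : dot Mx (vtx k l') - dot Mn (vtx k l') < 1).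
  { apply (Hh l' _ Hl'); exists (dot Mx (vtx k l')), (dot Mn (vtx k l')).
    repeat split; eauto. }
  specialize (Hmx z Hz); specialize (Hmn z' Hz'); lra.
Qed.

Lemma region_of_change_region i x : in_change_region k p n i x -> region x (vtx k i).
Proof.
  intros [_ [a' [[[y [Hy Ey]] Hmin] Ha']]].
  exists y; split; [split; [exact Hy | intros z Hz; rewrite Ey; auto] | rewrite Ey; exact Ha'].
Qed.

Lemma change_regions_disjoint :
  (forall i h, (i < k)%nat -> is_height k p n i h -> h < 1) ->
  forall i j x, (i < j < k)%nat -> ~ (in_change_region k p n i x /\ in_change_region k p n j x).
Proof.
  intros Hh i j x Hij [Hi Hj].
  pose proof (Kn_narrow_of_heights Hh) as Hnarrow.
  pose proof (region_of_change_region i x Hi) as Ri.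
  pose proof (region_of_change_region j x Hj) as Rj.
  destruct Hi as [Hx _].
  destruct (le_lt_dec (j - i) m).
  - apply (regions_disjoint_gap Hnarrow x i (j - i)); auto; [lia|].
    replace (i + (j - i))%nat with j by lia; exact Rj.
  - apply (regions_disjoint_gap Hnarrow x j (i + k - j)); auto; [lia|].
    replace (j + (i + k - j))%nat with (i + k)%nat by lia; rewrite vtx_add_k; exact Ri.
Qed.

End Process.

End RegularPolygon.

Theorem lemma6 (k : nat) (Hk5 : (5 <= k)%nat) (Hodd : Nat.odd k = true) :
  exists delta : R, 0 < delta /\
    forall (p : nat -> pt) (n : nat),
      admissible k p ->
      (forall i h, (i < k)%nat -> is_height k p n i h -> h < rho k + delta) ->
      forall i j, (i < k)%nat -> (j < k)%nat -> i <> j ->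
        forall x, ~ (in_change_region k p n i x /\ in_change_region k p n j x).
Proof.
  set (m := Nat.div2 k).
  assert (k_eq : k = (2 * m + 1)%nat)
    by (pose proof (Nat.div2_odd k) as H; rewrite Hodd in H; simpl in H; unfold m; lia).
  assert (m_ge2 : (2 <= m)%nat) by lia.
  exists (1 - rho k); split; [pose proof (rho_lt_1 k m k_eq m_ge2); lra|].
  intros p n Hadm Hh i j Hi Hj Hij x.
  assert (Hh1 : forall i h, (i < k)%nat -> is_height k p n i h -> h < 1)
    by (intros i' h Hi' Hih; specialize (Hh i' h Hi' Hih); lra).
  pose proof (change_regions_disjoint k m k_eq m_ge2 p n Hadm Hh1) as Hdisj.
  destruct (Nat.lt_gt_cases i j) as [[Hlt|Hgt] _]; [exact Hij| |].
  - apply Hdisj; lia.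
  - intros [Hxi Hxj]; apply (Hdisj j i x); [lia | split; assumption].
Qed.
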